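(* Let $\|\cdot\|_{Lo}$ be the Lorentz norm on $\mathbb{R}^p$ ($p\ge2$), with allowed sets all $S\subset\{1,\dots,p\}$ containing $p$ and associated norms $\Omega^{S^c}$ as in the context. Fix $J\subset\{1,\dots,p\}$ and let $g$ be the gauge norm described in the context. Then $g(\beta)=\|\beta\|_1$ for all $\beta\in\mathbb{R}^p$.
   Context: The Lorentz cone is $\mathcal{A}:=\{a\in\mathbb{R}^p: a_j>0\ \forall j,\ a_p\ge\|(a_1,\dots,a_{p-1})\|_2\}$ and $\|\beta\|_{Lo}:=\inf_{a\in\mathcal{A}}\frac12\sum_{i=1}^p\big(\beta_i^2/a_i+a_i\big)$. For $S\ni p$, $\mathcal{A}_{S^c}:=\{(a_j)_{j\in S^c}:a\in\mathcal{A}\}$, $\Omega^{S^c}(\beta_{S^c}):=\inf_{a\in\mathcal{A}_{S^c}}\frac12\sum_{j\in S^c}\big(\beta_j^2/a_j+a_j\big)$, and $\Upsilon_S(\beta):=\|\beta_S\|_{Lo}+\Omega^{S^c}(\beta_{S^c})$, where $\beta_S$ has entries $\beta_j1\{j\in S\}$. Let $\beta_{f(J)}:=\beta_J-\beta_{J^{c}}$, $\mathrm{flip}_J(B):=\{\beta_{f(J)}:\beta\in B\}$, $\overline{B}:=\bigcup_{S\text{ allowed}}\{\beta:\Upsilon_S(\beta)\le1\}$, $B_g:=\mathrm{Conv}(\overline{B}\cup\mathrm{flip}_J(\overline{B}))$, and $g(x):=\inf\{t>0:x\in tB_g\}$. *)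

From HB Require Import structures.
From mathcomp Require Import all_boot all_order all_algebra.
From mathcomp Require Import classical_sets boolp reals.
Set Implicit Arguments. Unset Strict Implicit. Unset Printing Implicit Defensive.
Import Order.TTheory GRing.Theory Num.Theory.
Local Open Scope ring_scope.
Local Open Scope classical_set_scope.

(* Coordinates {1,...,p} are indexed by 'I_p; the paper's coordinate p
   is the last index [ord_max] ('I_n.+1).  We work with p = n.+2 (p >= 2). *)

Section Defs.
Variables (R : realType) (n : nat).
Notation p := n.+2.
Notation vec := 'rV[R]_p.
Definition lst : 'I_p := ord_max.

Definition lorentz_cone : set vec :=
  [set a | (forall j, 0 < a 0 j) /\
           Num.sqrt (\sum_(j < p | j != lst) (a 0 j) ^+ 2) <= a 0 lst].

Definition lorentz_norm (b : vec) : R :=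
  inf [set x | exists2 a, lorentz_cone a &
        x = 2^-1 * \sum_(i < p) ((b 0 i) ^+ 2 / a 0 i + a 0 i)].

Definition omega_Sc (S : {set 'I_p}) (b : vec) : R :=
  inf [set x | exists2 a, lorentz_cone a &
        x = 2^-1 * \sum_(j < p | j \notin S) ((b 0 j) ^+ 2 / a 0 j + a 0 j)].

Definition restr (S : {set 'I_p}) (b : vec) : vec :=
  \row_j (if j \in S then b 0 j else 0).

Definition Upsilon (S : {set 'I_p}) (b : vec) : R :=
  lorentz_norm (restr S b) + omega_Sc S b.

Definition allowed (S : {set 'I_p}) : bool := lst \in S.

Definition Bbar : set vec :=
  [set b | exists2 S, allowed S & Upsilon S b <= 1].

Definition flipv (J : {set 'I_p}) (b : vec) : vec :=
  restr J b - restr (~: J) b.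

Definition conv_hull (A : set vec) : set vec :=
  [set x | exists m (w : 'I_m -> R) (v : 'I_m -> vec),
     [/\ forall i, 0 <= w i, \sum_(i < m) w i = 1, forall i, A (v i)
       & x = \sum_(i < m) w i *: v i]].

Definition Bg (J : {set 'I_p}) : set vec :=
  conv_hull (Bbar `|` (flipv J @` Bbar)).

Definition gauge (J : {set 'I_p}) (x : vec) : R :=
  inf [set t | 0 < t /\ exists2 y, Bg J y & x = t *: y].

Definition l1norm (b : vec) : R := \sum_(i < p) `|b 0 i|.

End Defs.

From HB Require Import structures.
From mathcomp Require Import all_boot all_order all_algebra.
From mathcomp Require Import classical_sets boolp reals.
From mathcomp Require Import ring lra.
Set Implicit Arguments. Unset Strict Implicit. Unset Printing Implicit Defensive.
Import Order.TTheory GRing.Theory Num.Theory.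
Local Open Scope ring_scope.
Local Open Scope classical_set_scope.

(* By AM-GM, (x^2/a + a)/2 >= |x| for a > 0, with near-equality when a is
   slightly above |x|.  Hence every Upsilon_S dominates the l1 norm.  For
   S = {p} the vector beta_S lives on the last coordinate alone, and Omega^{S^c}
   does not see the last coordinate, so in both infima the cone constraint
   a_p >= ||(a_1,...,a_{p-1})||_2 can be met at an arbitrarily small cost:
   Upsilon_{{p}} is the l1 norm.  Thus Bbar is the l1 unit ball, which is
   convex and invariant under sign flips, so B_g is the l1 ball and its gauge
   is the l1 norm. *)

Lemma twice_norm_le_sqr_div_add {R : realFieldType} (b a : R) :
  0 < a -> 2 * `|b| <= b ^+ 2 / a + a.
Proof.
move=> a_gt0.
have -> : b ^+ 2 / a + a = (b ^+ 2 + a * a) / a by field; rewrite gt_eqF.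
rewrite ler_pdivlMr // -real_normK ?num_real //.
have := sqr_ge0 (`|b| - a); nra.
Qed.

Lemma sqr_div_add_le_norm_add {R : realFieldType} (b a : R) :
  0 < a -> `|b| <= a -> b ^+ 2 / a + a <= `|b| + a.
Proof.
move=> a_gt0 b_le_a; rewrite lerD2r ler_pdivrMr // -real_normK ?num_real //.
have := normr_ge0 b; nra.
Qed.

Lemma inf_gt0_ge {R : realType} (l : R) : 0 <= l -> inf [set t | 0 < t /\ l <= t] = l.
Proof.
move=> l_ge0; have mem_gt t : l < t -> [set t | 0 < t /\ l <= t] t.
  by move=> lt; split; [exact: le_lt_trans lt | exact: ltW].
apply/eqP; rewrite eq_le; apply/andP; split.
  apply/ler_addgt0Pr => e e_gt0; apply: ge_inf; last by apply: mem_gt; rewrite ltrDl.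
  by exists 0 => t [/ltW].
apply: lb_le_inf; first by exists (l + 1); apply: mem_gt; rewrite ltrDl.
by move=> t [].
Qed.

Section LorentzGauge.
Variables (R : realType) (n : nat).
Notation p := n.+2.
Notation vec := 'rV[R]_p.

Definition cone_cost (P : pred 'I_p) (b a : vec) : R :=
  2^-1 * \sum_(j < p | P j) (b 0 j ^+ 2 / a 0 j + a 0 j).

Definition cone_inf (P : pred 'I_p) (b : vec) : R :=
  inf [set x | exists2 a, lorentz_cone a & x = cone_cost P b a].

Lemma lorentz_normE (b : vec) : lorentz_norm b = cone_inf predT b.
Proof. by []. Qed.

Lemma omega_ScE (S : {set 'I_p}) (b : vec) :
  omega_Sc S b = cone_inf (fun j => j \notin S) b.
Proof. by []. Qed.

Definition cone_lift (u : vec) : vec :=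
  \row_j (if j == lst n then Num.sqrt (\sum_(k < p | k != lst n) u 0 k ^+ 2) + u 0 j
          else u 0 j).

Lemma cone_lift_off (u : vec) j : j != lst n -> cone_lift u 0 j = u 0 j.
Proof. by rewrite mxE => /negbTE ->. Qed.

Lemma cone_lift_cone (u : vec) : (forall j, 0 < u 0 j) -> lorentz_cone (cone_lift u).
Proof.
move=> u_gt0; split.
  by move=> j; rewrite mxE; case: eqP => _ //; rewrite ltr_wpDl ?sqrtr_ge0.
rewrite mxE eqxx (eq_bigr (fun k => u 0 k ^+ 2)) => [|k kl]; last by rewrite cone_lift_off.
by rewrite lerDl ltW.
Qed.

Lemma exists_lorentz_cone : exists a : vec, lorentz_cone a.
Proof. by exists (cone_lift (const_mx 1)); apply: cone_lift_cone => j; rewrite mxE. Qed.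

Lemma cone_cost_ge (P : pred 'I_p) (b a : vec) :
  lorentz_cone a -> \sum_(j < p | P j) `|b 0 j| <= cone_cost P b a.
Proof.
move=> [a_gt0 _].
have : \sum_(j < p | P j) 2 * `|b 0 j| <= \sum_(j < p | P j) (b 0 j ^+ 2 / a 0 j + a 0 j).
  by apply: ler_sum => j _; apply: twice_norm_le_sqr_div_add.
rewrite -mulr_sumr /cone_cost; lra.
Qed.

Lemma cone_inf_ge (P : pred 'I_p) (b : vec) :
  \sum_(j < p | P j) `|b 0 j| <= cone_inf P b.
Proof.
apply: lb_le_inf; last by move=> _ [a a_cone ->]; exact: cone_cost_ge.
by have [a a_cone] := exists_lorentz_cone; exists (cone_cost P b a), a.
Qed.

Lemma cone_inf_le (P : pred 'I_p) (b : vec) :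
  (forall c, 0 < c -> exists2 a, lorentz_cone a &
     forall j, P j -> `|b 0 j| <= a 0 j <= `|b 0 j| + c) ->
  cone_inf P b <= \sum_(j < p | P j) `|b 0 j|.
Proof.
move=> near_opt; apply/ler_addgt0Pr => e e_gt0.
have p_gt0 : 0 < p%:R :> R by rewrite ltr0n.
have [d d_gt0 slack_le] : exists2 d : R, 0 < d & \sum_(j < p | P j) d <= e.
  exists (e / p%:R); first by rewrite divr_gt0.
  apply: le_trans (_ : \sum_(j < p) e / p%:R <= _).
    by rewrite [X in _ <= X](bigID P) /= lerDl sumr_ge0 // => j _; rewrite ltW ?divr_gt0.
  by rewrite sumr_const card_ord -(mulr_natr (e / p%:R)) divfK ?gt_eqF.
have [a a_cone a_near] := near_opt d d_gt0.
apply: le_trans (_ : cone_cost P b a <= _).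
  apply: ge_inf; last by exists a.
  by exists 0 => _ [a' a'_cone ->]; exact: le_trans (sumr_ge0 _ _) (cone_cost_ge P b a'_cone).
have cost_le : \sum_(j < p | P j) (b 0 j ^+ 2 / a 0 j + a 0 j) <=
               \sum_(j < p | P j) (2 * `|b 0 j| + d).
  apply: ler_sum => j Pj; have /andP[ba ab] := a_near j Pj.
  have := sqr_div_add_le_norm_add (a_cone.1 j) ba; lra.
move: cost_le; rewrite [X in _ <= X]big_split /= -mulr_sumr /cone_cost; lra.
Qed.

Lemma cone_inf_le_off_last (P : pred 'I_p) (b : vec) :
  ~~ P (lst n) -> cone_inf P b <= \sum_(j < p | P j) `|b 0 j|.
Proof.
move=> Pl; apply: cone_inf_le => c c_gt0.
exists (cone_lift (\row_j (`|b 0 j| + c))).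
  by apply: cone_lift_cone => j; rewrite mxE ltr_wpDl.
move=> j Pj; rewrite cone_lift_off; last by apply: contraNneq Pl => <-.
by rewrite mxE lerDl (ltW c_gt0) lexx.
Qed.

Lemma cone_inf_le_last (P : pred 'I_p) (b : vec) :
  (forall j, j != lst n -> b 0 j = 0) -> cone_inf P b <= \sum_(j < p | P j) `|b 0 j|.
Proof.
move=> b_last; apply: cone_inf_le => c c_gt0.
have p_gt0 : 0 < p%:R :> R by rewrite ltr0n.
(* The other coordinates of [b] vanish, so they only need a weight [d] small
   enough that the cone constraint costs at most [c] on the last one. *)
set d := c / p%:R; have d_gt0 : 0 < d by rewrite divr_gt0.
have d_le : d <= c by rewrite ler_pdivrMr // ler_pMr // ler1n.
exists (\row_j (if j == lst n then `|b 0 j| + c else d)); last first.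
  move=> j _; rewrite mxE; case: eqP => [_|/eqP jl].
    by rewrite lerDl (ltW c_gt0) lexx.
  by rewrite b_last // normr0 add0r (ltW d_gt0) d_le.
split=> [j|]; first by rewrite mxE; case: eqP => _ //; rewrite ltr_wpDl.
rewrite mxE eqxx (eq_bigr (fun=> d ^+ 2)) => [|j /negbTE jl]; last by rewrite mxE jl.
apply: le_trans (_ : Num.sqrt (c ^+ 2) <= _); last by rewrite sqrtr_sqr gtr0_norm // lerDr.
rewrite ler_sqrt ?sqr_ge0 //; apply: le_trans (_ : \sum_(j < p) d ^+ 2 <= _).
  by rewrite [X in _ <= X](bigID (fun j => j != lst n)) /= lerDl sumr_ge0 // => *; exact: sqr_ge0.
rewrite sumr_const card_ord -mulr_natr expr2 -mulrA [d * _]mulrC divfK ?gt_eqF //.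
by rewrite expr2 ler_pM2l.
Qed.

Lemma l1norm_ge0 (b : vec) : 0 <= l1norm b.
Proof. exact: sumr_ge0. Qed.

Lemma l1normZ (t : R) (b : vec) : l1norm (t *: b) = `|t| * l1norm b.
Proof. by rewrite /l1norm mulr_sumr; apply: eq_bigr => j _; rewrite mxE normrM. Qed.

Lemma l1norm_sum (m : nat) (v : 'I_m -> vec) :
  l1norm (\sum_(i < m) v i) <= \sum_(i < m) l1norm (v i).
Proof.
rewrite /l1norm exchange_big /=; apply: ler_sum => j _.
by rewrite summxE; exact: ler_norm_sum.
Qed.

Lemma l1norm_flipv (J : {set 'I_p}) (b : vec) : l1norm (flipv J b) = l1norm b.
Proof.
apply: eq_bigr => j _; rewrite !mxE inE.
by case: (j \in J); rewrite /= ?subr0 ?sub0r ?normrN.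
Qed.

Lemma l1norm_restr_split (S : {set 'I_p}) (b : vec) :
  l1norm b = l1norm (restr S b) + \sum_(j < p | j \notin S) `|b 0 j|.
Proof.
rewrite /l1norm (bigID (mem S)) /= [in X in X + _]big_mkcond /=.
congr (_ + _); apply: eq_bigr => j _; rewrite mxE.
by case: ifP; rewrite ?normr0.
Qed.

Lemma Upsilon_ge (S : {set 'I_p}) (b : vec) : l1norm b <= Upsilon S b.
Proof.
by rewrite (l1norm_restr_split S) /Upsilon lorentz_normE omega_ScE lerD ?cone_inf_ge.
Qed.

Lemma Upsilon_last_le (b : vec) : Upsilon [set lst n]%SET b <= l1norm b.
Proof.
rewrite (l1norm_restr_split [set lst n]%SET) /Upsilon lorentz_normE omega_ScE lerD //.
  by apply: cone_inf_le_last => j jl; rewrite mxE inE (negbTE jl).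
by apply: cone_inf_le_off_last; rewrite inE negbK.
Qed.

Lemma Bbar_l1ballE : Bbar (n := n) = [set b : vec | l1norm b <= 1].
Proof.
apply/seteqP; split=> b.
  by move=> [S _]; exact: le_trans (Upsilon_ge S b).
by exists [set lst n]%SET; [rewrite /allowed inE | exact: le_trans (Upsilon_last_le b) _].
Qed.

Lemma sub_conv_hull (A : set vec) : A `<=` conv_hull A.
Proof.
move=> b Ab; exists 1%N, (fun=> 1), (fun=> b).
by split=> //; rewrite big_ord1 // scale1r.
Qed.

Lemma conv_hull_sub_l1ball (A : set vec) :
  A `<=` [set b | l1norm b <= 1] -> conv_hull A `<=` [set b | l1norm b <= 1].
Proof.
move=> A_sub _ [m [w [v [w_ge0 w_sum1 Av ->]]]].
apply: le_trans (l1norm_sum _) _; rewrite -w_sum1; apply: ler_sum => i _.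
by rewrite l1normZ ger0_norm // ler_piMr // A_sub.
Qed.

Lemma Bg_l1ballE (J : {set 'I_p}) : Bg J = [set b : vec | l1norm b <= 1].
Proof.
apply/seteqP; split; last by move=> b b_le1; apply: sub_conv_hull; left; rewrite Bbar_l1ballE.
apply: conv_hull_sub_l1ball => x; rewrite Bbar_l1ballE => -[// | [b b_le1 <-]].
by rewrite /= l1norm_flipv.
Qed.

Lemma scaled_l1ballP (b : vec) (t : R) :
  0 < t -> (exists2 y, l1norm y <= 1 & b = t *: y) <-> l1norm b <= t.
Proof.
move=> t_gt0; split=> [[y y_le1 ->]|b_le].
  by rewrite l1normZ gtr0_norm //; exact: ler_piMr (ltW t_gt0) y_le1.
exists (t^-1 *: b); last by rewrite scalerA mulfV ?gt_eqF ?scale1r.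
by rewrite l1normZ gtr0_norm ?invr_gt0 // ler_pdivrMl // mulr1.
Qed.

End LorentzGauge.

Theorem lemma12 (R : realType) (n : nat) (J : {set 'I_n.+2}) (b : 'rV[R]_n.+2) :
  gauge J b = l1norm b.
Proof.
rewrite /gauge Bg_l1ballE -[RHS]inf_gt0_ge ?l1norm_ge0 //.
congr inf; apply/seteqP; split=> t [t_gt0 bt]; split=> //; exact/(scaled_l1ballP b t_gt0).
Qed.
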